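(* For each $\mathbf b\in\mathcal B$, the $\mathbb C$-linear map $g_{\mathbf b}:S_0\to\mathbb C$ defined by $g_{\mathbf b}(x^u)=g^{(\mathbf b)}_u$ ($u\in M$) vanishes on $\sum_{i=1}^nD_{i,0}S_0$, and the induced functionals $\{g_{\mathbf b}\}_{\mathbf b\in\mathcal B}$ form the basis of $\mathrm{Hom}_{\mathbb C}(\mathcal W_0,\mathbb C)$ dual to the basis $\{x^{\mathbf b}\}_{\mathbf b\in\mathcal B}$ of $\mathcal W_0$.
   Context: Let $A=\{\mathbf a_1,\dots,\mathbf a_m\}\subseteq\mathbb Z^n$ be linearly independent over $\mathbb R$ and $\ell_1,\dots,\ell_m$ positive integers (part of a relation $\ell_0\mathbf a_0=\sum_j\ell_j\mathbf a_j$, $\ell_0=\sum_j\ell_j$, $\mathbf a_0\in\mathbb Z^n$, $\gcd(\ell_0,\dots,\ell_m)=1$). Let $f_0=\sum_{j=1}^m\ell_jx^{\mathbf a_j}$. Let $V$ be the real span of $A$, $V_{\mathbb Z}=V\cap\mathbb Z^n$, $C(A)$ the real cone generated by $A$, $M=V_{\mathbb Z}\cap C(A)$. Let $S_0$ be the $\mathbb C$-span of $\{x^u:u\in M\}$, $D_{i,0}=x_i\partial/\partial x_i+x_i\partial f_0/\partial x_i$ ($i=1,\dots,n$), and $\mathcal W_0=S_0/\sum_iD_{i,0}S_0$ (which has basis $\{x^{\mathbf b}:\mathbf b\in\mathcal B\}$). Let $P(A)=\{\sum_jc_j\mathbf a_j:0\le c_j<1\}$ and $\mathcal B=V_{\mathbb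 Z}\cap P(A)$. For $z\in\mathbb C$, $l\in\mathbb Z$: $[z]_0=1$, $[z]_l=1/((z+1)\cdots(z+l))$ for $l>0$, $[z]_l=z(z-1)\cdots(z+l+1)$ for $l<0$. For $\mathbf b=\sum_jv_j\mathbf a_j\in\mathcal B$ ($v_j\in[0,1)$) and $u\in M$, let $g^{(\mathbf b)}_u=\prod_{j=1}^m[-v_j]_{s_j}\ell_j^{s_j}$ if $u=\sum_j(v_j-s_j)\mathbf a_j$ with all $s_j\in\mathbb Z_{\le0}$, and $g^{(\mathbf b)}_u=0$ otherwise (these are the coefficients of $\prod_j\ell_j^{v_j}g_j(\ell_jx^{\mathbf a_j})=\sum_ug^{(\mathbf b)}_ux^{-u}$, $g_j(t)=\sum_{s\le0}[-v_j]_st^{-v_j+s}$). *)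

From HB Require Import structures.
From mathcomp Require Import all_boot all_order all_algebra.
From mathcomp Require Import complex.
From mathcomp Require Import boolp classical_sets functions cardinality fsbigop reals.
Set Implicit Arguments. Unset Strict Implicit. Unset Printing Implicit Defensive.
Import Order.TTheory GRing.Theory Num.Theory.
Local Open Scope ring_scope.
Local Open Scope classical_set_scope.

Section Defs.
Variables (R : realType) (n m : nat).
Variable a : 'I_m -> 'rV[int]_n.
Variable l : 'I_m -> nat.

Local Notation C := R[i].

Definition toR (u : 'rV[int]_n) : 'rV[R]_n := map_mx (fun z : int => z%:~R) u.

Definition lin_indep : Prop :=
  forall c : 'I_m -> R, \sum_j c j *: toR (a j) = 0 -> forall j, c j = 0.

Definition Vspan : set 'rV[R]_n :=
  [set x | exists c : 'I_m -> R, x = \sum_j c j *: toR (a j)].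
Definition coneA : set 'rV[R]_n :=
  [set x | exists c : 'I_m -> R, (forall j, 0 <= c j) /\ x = \sum_j c j *: toR (a j)].
Definition parA : set 'rV[R]_n :=
  [set x | exists c : 'I_m -> R, (forall j, 0 <= c j < 1) /\ x = \sum_j c j *: toR (a j)].
Definition VZ : set 'rV[int]_n := [set u | Vspan (toR u)].
Definition Mset : set 'rV[int]_n := [set u | VZ u /\ coneA (toR u)].
Definition Bset : set 'rV[int]_n := [set u | VZ u /\ parA (toR u)].

Definition bracket (z : C) (k : int) : C :=
  match k with
  | Posz k => (\prod_(i < k) (z + (i.+1)%:R))^-1
  | Negz k => \prod_(i < k.+1) (z - i%:R)
  end.

Definition RtoC (x : R) : C := Complex x 0.

Definition gdata (b u : 'rV[int]_n) (p : ('I_m -> R) * ('I_m -> int)) : Prop :=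
  (forall j, 0 <= p.1 j < 1) /\ toR b = \sum_j p.1 j *: toR (a j) /\
  (forall j, p.2 j <= 0) /\ toR u = \sum_j (p.1 j - (p.2 j)%:~R) *: toR (a j).

(* g^(b)_u (the data (v,s) is unique by linear independence) *)
Definition gcoef (b u : 'rV[int]_n) : C :=
  match pselect (exists p, gdata b u p) with
  | left H => let p := projT1 (cid H) in
      \prod_j (bracket (- RtoC (p.1 j)) (p.2 j) * ((l j)%:R : C) ^ (p.2 j))
  | right _ => 0
  end.

(* Elements of S_0 are represented as formal finite sums  sum_k c_k x^{u_k}
   (lists of (coefficient, exponent) pairs with exponents in M); a linear
   functional on S_0 is determined by its values h(u) = phi(x^u), u in M. *)
Definition S0elt (p : seq (C * 'rV[int]_n)) : Prop :=
  forall t, t \in p -> Mset t.2.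

Definition lfeval (h : 'rV[int]_n -> C) (p : seq (C * 'rV[int]_n)) : C :=
  \sum_(t <- p) t.1 * h t.2.

(* D_{i,0} = x_i d/dx_i + x_i d f_0/dx_i, f_0 = sum_j l_j x^{a_j}:
   D_{i,0}(c x^u) = c u_i x^u + sum_j c l_j (a_j)_i x^{u + a_j} *)
Definition Dop (i : 'I_n) (p : seq (C * 'rV[int]_n)) : seq (C * 'rV[int]_n) :=
  flatten [seq (t.1 * (t.2 ord0 i)%:~R, t.2) ::
               [seq (t.1 * (l j)%:R * (a j ord0 i)%:~R, t.2 + a j) | j <- enum 'I_m]
          | t : C * 'rV[int]_n <- p].

Definition Dsum (p : 'I_n -> seq (C * 'rV[int]_n)) : seq (C * 'rV[int]_n) :=
  flatten [seq Dop i (p i) | i <- enum 'I_n].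

Definition kills_image (h : 'rV[int]_n -> C) : Prop :=
  forall p : 'I_n -> seq (C * 'rV[int]_n),
    (forall i, S0elt (p i)) -> lfeval h (Dsum p) = 0.

End Defs.

(* Write u in M as u = sum_j (v_j - s_j) a_j with v_j in [0,1) and integers
   s_j <= 0; by linear independence, b = sum_j v_j a_j in B is determined by u.
   Using functionals dual to the a_j, a linear form h on S_0 vanishes on
   sum_i D_{i,0} S_0 iff  l_k h(x^(w + a_k)) = - c_k h(x^w)  for every
   w = sum_j c_j a_j in M.  The coefficients g^(b) satisfy this recurrence,
   because [z]_(s-1) = (z + s) [z]_s, and vanish outside the class of b.
   Conversely, a form satisfying it is determined on the class of b by its
   value at x^b, by induction on sum_j |s_j|; hence h = sum_b h(x^b) g_b. *)

From HB Require Import structures.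
From mathcomp Require Import all_boot all_order all_algebra.
From mathcomp Require Import complex.
From mathcomp Require Import boolp classical_sets functions cardinality fsbigop reals.
From mathcomp Require Import ring zify lra.
Import Order.TTheory GRing.Theory Num.Theory.
Local Open Scope ring_scope.
Local Open Scope classical_set_scope.
Set Implicit Arguments. Unset Strict Implicit. Unset Printing Implicit Defensive.

Lemma frac_int_eq (R : realFieldType) (x y : R) (p q : int) :
  0 <= x < 1 -> 0 <= y < 1 -> x - p%:~R = y - q%:~R -> p = q.
Proof.
move=> /andP[x0 x1] /andP[y0 y1] E.
have Epq : (p - q)%:~R = x - y :> R by rewrite intrB; lra.
have : -1 < p - q < 1 by rewrite -!(ltr_int R) Epq /=; apply/andP; split; lra.
lia.
Qed.

Section Proposition.
Variables (R : realType) (n m : nat) (a : 'I_m -> 'rV[int]_n) (l : 'I_m -> nat).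
Hypothesis a_indep : lin_indep R a.
Hypothesis l_gt0 : forall j, (0 < l j)%N.

Local Notation C := R[i].
Local Notation toR := (@toR R n).
Local Notation RtoC := (@RtoC R).
Local Notation lincomb c := (\sum_j c j *: toR (a j)).
Local Notation gdata := (@gdata R n m a).
Local Notation gcoef := (@gcoef R n m a l).
Local Notation Mset := (@Mset R n m a).
Local Notation Bset := (@Bset R n m a).
Local Notation lfeval := (@lfeval R n).
Local Notation Dop := (@Dop R n m a l).
Local Notation Dsum := (@Dsum R n m a l).
Local Notation kills_image := (@kills_image R n m a l).

Lemma RtoCE (x : R) : RtoC x = x%:C%C. Proof. by []. Qed.

Lemma toRE u i : toR u 0 i = (u 0 i)%:~R.
Proof. by rewrite mxE. Qed.

Lemma toRD u w : toR (u + w) = toR u + toR w.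
Proof. exact: (map_mxD (intr : {additive int -> R})). Qed.

Lemma toRB u w : toR (u - w) = toR u - toR w.
Proof. exact: (map_mxB (intr : {additive int -> R})). Qed.

Lemma toR_sum k (F : 'I_k -> 'rV[int]_n) : toR (\sum_j F j) = \sum_j toR (F j).
Proof. exact: (map_mx_sum (intr : {additive int -> R})). Qed.

Lemma toRZ (t : int) u : toR (t *: u) = t%:~R *: toR u.
Proof. exact: (map_mxZ (intr : {rmorphism int -> R})). Qed.

Lemma toR_inj : injective toR.
Proof.
move=> u w /matrixP E; apply/matrixP => i j.
by move: (E i j); rewrite !mxE => /intr_inj.
Qed.

Lemma lincomb_entry (c : 'I_m -> R) i : (lincomb c) 0 i = \sum_j c j * (a j 0 i)%:~R.
Proof. by rewrite summxE; apply: eq_bigr => j _; rewrite mxE toRE. Qed.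

Lemma lincomb_entryC w (c : 'I_m -> R) i : toR w = lincomb c ->
  ((w 0 i)%:~R : C) = \sum_j RtoC (c j) * (a j 0 i)%:~R.
Proof.
move=> /matrixP /(_ 0 i); rewrite toRE lincomb_entry => /(congr1 RtoC).
rewrite !RtoCE rmorph_int => ->; rewrite rmorph_sum.
by apply: eq_bigr => j _; rewrite rmorphM rmorph_int.
Qed.

Lemma lincomb_inj (c c' : 'I_m -> R) : lincomb c = lincomb c' -> c =1 c'.
Proof.
move=> E j; apply/eqP; rewrite -subr_eq0; apply/eqP.
apply: (a_indep (c := fun j => c j - c' j)).
by under eq_bigr do rewrite scalerBl; rewrite sumrB E subrr.
Qed.

Lemma lincomb_add_delta (c : 'I_m -> R) k :
  lincomb (fun j => c j + (j == k)%:R) = lincomb c + toR (a k).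
Proof.
under eq_bigr do rewrite scalerDl.
rewrite big_split /=; congr (_ + _).
rewrite (bigD1 k) //= eqxx scale1r big1 ?addr0 // => j /negbTE ->.
by rewrite scale0r.
Qed.

Definition gprod (v : 'I_m -> R) (s : 'I_m -> int) : C :=
  \prod_j (bracket (- RtoC (v j)) (s j) * ((l j)%:R : C) ^ (s j)).

Lemma gprod0 v : gprod v (fun=> 0) = 1.
Proof. by rewrite /gprod big1 // => j _; rewrite /= big_ord0 invr1 expr0z mulr1. Qed.

Lemma bracketN (z : C) (k : nat) : bracket z (- k%:Z) = \prod_(i < k) (z - i%:R).
Proof. by case: k => [|k] /=; rewrite ?big_ord0 ?invr1. Qed.

Lemma l_neq0 k : ((l k)%:R : C) != 0.
Proof. by rewrite pnatr_eq0 -lt0n l_gt0. Qed.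

Lemma gprod_decr v s k : s k <= 0 ->
  gprod v (fun j => s j - (j == k)%:Z) * (l k)%:R
  = - (RtoC (v k) - (s k)%:~R) * gprod v s.
Proof.
move=> sk0; rewrite /gprod (bigD1 k) //= [in RHS](bigD1 k) //= eqxx.
rewrite (eq_bigr (fun j => bracket (- RtoC (v j)) (s j) * ((l j)%:R : C) ^ (s j)));
  last by move=> j /negbTE ->; rewrite subr0.
set P := \prod_(j | j != k) _.
have [N ->] : exists N : nat, s k = - N%:Z by exists `|s k|%N; lia.
have -> : - N%:Z - 1 = - N.+1%:Z by lia.
rewrite !bracketN -!invr_expz big_ord_recr /= exprSzr invfM mulrNz.
field.
by rewrite l_neq0 expf_neq0 ?l_neq0.
Qed.

Lemma gdata_uniq b u p q : gdata b u p -> gdata b u q -> p.1 =1 q.1 /\ p.2 =1 q.2.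
Proof.
move=> [_ [Eb [_ Eu]]] [_ [Eb' [_ Eu']]].
have E1 := lincomb_inj (etrans (esym Eb) Eb').
split=> // j; have := lincomb_inj (etrans (esym Eu) Eu') j.
by rewrite E1 => /addrI /oppr_inj /intr_inj.
Qed.

Lemma gcoef_gdata b u p : gdata b u p -> gcoef b u = gprod p.1 p.2.
Proof.
move=> g; rewrite /gcoef; case: pselect => [H|[]]; last by exists p.
have [E1 E2] := gdata_uniq (projT2 (cid H)) g.
by apply: eq_bigr => j _; rewrite E1 E2.
Qed.

Lemma gcoef_eq0 b u : ~ (exists p, gdata b u p) -> gcoef b u = 0.
Proof. by move=> H; rewrite /gcoef; case: pselect. Qed.

Lemma gdata_Mset b u p : gdata b u p -> Mset u.
Proof.
move=> [v01 [_ [s_le0 Eu]]]; split; first by exists (fun j => p.1 j - (p.2 j)%:~R).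
exists (fun j => p.1 j - (p.2 j)%:~R); split => // j.
have /andP[v0 _] := v01 j; have := s_le0 j; rewrite -(ler_int R) => s0.
by rewrite subr_ge0 (le_trans s0 v0).
Qed.

Lemma gdata_Bset b u p : gdata b u p -> Bset b.
Proof. by move=> [v01 [Eb _]]; split; exists p.1. Qed.

Lemma gdata_base_uniq b b' u p q : gdata b u p -> gdata b' u q -> b = b'.
Proof.
move=> [v01 [Eb [_ Eu]]] [v01' [Eb' [_ Eu']]].
have E := lincomb_inj (etrans (esym Eu) Eu').
have Es j : p.2 j = q.2 j by apply: frac_int_eq (v01 j) (v01' j) (E j).
apply: toR_inj; rewrite Eb Eb'; apply: eq_bigr => j _.
by move: (E j); rewrite Es => /addIr ->.
Qed.

Lemma gdata_self b : Bset b -> exists v, gdata b b (v, fun=> 0).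
Proof.
move=> [_ [v [v01 Eb]]]; exists v; do 3!split => //=.
by rewrite Eb; apply: eq_bigr => j _; rewrite subr0.
Qed.

Lemma gcoef_dual b b' : Bset b -> Bset b' -> gcoef b b' = if b == b' then 1 else 0.
Proof.
move=> Bb Bb'; have [v' g'] := gdata_self Bb'.
case: eqP => [<-|ne].
  by have [v g] := gdata_self Bb; rewrite (gcoef_gdata g) gprod0.
by rewrite gcoef_eq0 // => -[p g]; apply: ne; apply: gdata_base_uniq g g'.
Qed.

Lemma gdata_addr b w v s k : gdata b w (v, s) ->
  gdata b (w + a k) (v, fun j => s j - (j == k)%:Z).
Proof.
move=> [v01 [Eb [s_le0 Ew]]]; do 3!split => //=.
  by move=> j; rewrite lerBlDr (le_trans (s_le0 j)) // lerDl.
rewrite toRD Ew -lincomb_add_delta; apply: eq_bigr => j _.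
by rewrite intrB; congr (_ *: _); case: (j == k) => /=; ring.
Qed.

Lemma gdata_subr b w v s k : gdata b (w + a k) (v, s) -> s k < 0 ->
  gdata b w (v, fun j => s j + (j == k)%:Z).
Proof.
move=> [v01 [Eb [s_le0 Ew]]] sk; do 3!split => //=.
  by move=> j; case: eqP => [->|_]; [lia | rewrite addr0].
apply: (addIr (toR (a k))); rewrite -toRD Ew -lincomb_add_delta.
by apply: eq_bigr => j _; rewrite intrD; congr (_ *: _); case: (j == k) => /=; ring.
Qed.

Lemma gdata_pred b w p k : Mset w -> gdata b (w + a k) p -> exists q, gdata b w q.
Proof.
case: p => v s [_ [c [c_ge0 Ew]]] g.
have [sk|] := ltP (s k) 0; first by eexists; apply: gdata_subr g sk.
(* else [s k = 0], and the [k]-th coordinate [v k < 1] of [w + a k] is [c k + 1] *)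
move: g => [v01 [_ [s_le0 Ewk]]] sk_ge0; exfalso.
have sk0 : s k = 0 by apply/eqP; rewrite eq_le s_le0 sk_ge0.
move: Ewk; rewrite toRD Ew -lincomb_add_delta => /esym /lincomb_inj /(_ k).
rewrite /= eqxx sk0 subr0 /= => E; have := c_ge0 k; have /andP[_ /= vk1] := v01 k.
lra.
Qed.

Definition shift_rel (h : 'rV[int]_n -> C) : Prop :=
  forall w (c : 'I_m -> R) k, Mset w -> toR w = lincomb c ->
  (l k)%:R * h (w + a k) = - RtoC (c k) * h w.

Lemma gcoef_shift_rel b : shift_rel (gcoef b).
Proof.
move=> w c k Mw Ew.
have [[[v s] g] | nog] := pselect (exists p, gdata b w p); last first.
  rewrite [gcoef b w]gcoef_eq0 // mulr0 gcoef_eq0 ?mulr0 // => -[p gk].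
  exact/nog/(gdata_pred Mw gk).
rewrite (gcoef_gdata g) (gcoef_gdata (gdata_addr k g)) mulrC /=.
have [_ [_ [s_le0 Ew']]] := g.
rewrite gprod_decr // (lincomb_inj (etrans (esym Ew) Ew') k).
by rewrite !RtoCE rmorphB rmorph_int.
Qed.

Definition Deval (h : 'rV[int]_n -> C) (i : 'I_n) (w : 'rV[int]_n) : C :=
  (w 0 i)%:~R * h w + \sum_j (l j)%:R * (a j 0 i)%:~R * h (w + a j).

Lemma lfeval_Dop h i p :
  lfeval h (Dop i p) = \sum_(t <- p) t.1 * Deval h i t.2.
Proof.
rewrite /lfeval /Dop big_flatten big_map /=; apply: eq_bigr => t _.
rewrite big_cons big_map enumT /Deval mulrDr mulrA mulr_sumr; congr (_ + _).
by apply: eq_bigr => j _; rewrite !mulrA.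
Qed.

Lemma lfeval_Dsum h p : lfeval h (Dsum p) = \sum_i \sum_(t <- p i) t.1 * Deval h i t.2.
Proof.
rewrite /Dsum /lfeval big_flatten big_map enumT; apply: eq_bigr => i _.
exact: lfeval_Dop.
Qed.

Lemma kills_imageP h :
  kills_image h <-> forall i w, Mset w -> Deval h i w = 0.
Proof.
split=> [hK i w Mw | hD p Sp]; last first.
  rewrite lfeval_Dsum big1 // => i _.
  by rewrite big_seq big1 // => t /(Sp i) Mt; rewrite hD ?mulr0.
pose p i' := if i' == i then [:: (1 : C, w)] else [::].
have Sp i' : S0elt a (p i') by rewrite /p; case: eqP => // _ t; rewrite inE => /eqP ->.
rewrite -(hK p Sp) lfeval_Dsum (bigD1 i) //= {1}/p eqxx big_seq1 mul1r.
rewrite big1 ?addr0 // => i' /negbTE ne.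
by rewrite /p ne big_nil.
Qed.

Lemma Deval_lincomb h i w (c : 'I_m -> R) : toR w = lincomb c ->
  Deval h i w = \sum_j (a j 0 i)%:~R * (RtoC (c j) * h w + (l j)%:R * h (w + a j)).
Proof.
move=> Ew; rewrite /Deval (lincomb_entryC i Ew) mulr_suml -big_split /=.
by apply: eq_bigr => j _; ring.
Qed.

Lemma row_free_generators :
  row_free (\matrix_(j, i) (a j 0 i)%:~R : 'M[R]_(m, n)).
Proof.
apply: inj_row_free => v; rewrite mulmx_sum_row => v0.
apply/rowP => j; rewrite mxE; apply: (a_indep (c := fun j => v 0 j)) => //.
rewrite -[RHS]v0; apply: eq_bigr => k _; congr (_ *: _).
by apply/rowP => i; rewrite !mxE.
Qed.

Lemma dual_functionals : exists L : 'I_m -> 'I_n -> C,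
  forall k j, \sum_i L k i * (a j 0 i)%:~R = (k == j)%:R.
Proof.
have : row_free (map_mx (real_complex R) (\matrix_(j, i) (a j 0 i)%:~R)).
  by rewrite row_free_map row_free_generators.
move=> /row_freeP [B /matrixP AB1]; exists (fun k i => B i k) => k j.
move: (AB1 j k); rewrite !mxE eq_sym => <-; apply: eq_bigr => i _.
by rewrite !mxE mulrC rmorph_int.
Qed.

Lemma kills_image_shift_rel h : kills_image h <-> shift_rel h.
Proof.
rewrite kills_imageP; split=> [hD w c k Mw Ew | hS i w Mw].
  have [L Ldual] := dual_functionals.
  pose X j := RtoC (c j) * h w + (l j)%:R * h (w + a j).
  have : \sum_i L k i * Deval h i w = 0 by rewrite big1 // => i _; rewrite hD ?mulr0.
  under eq_bigr do rewrite (Deval_lincomb _ _ Ew) mulr_sumr.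
  rewrite exchange_big /=.
  have inner j : \sum_i L k i * ((a j 0 i)%:~R * X j) = (k == j)%:R * X j.
    by rewrite -(Ldual k j) mulr_suml; apply: eq_bigr => i _; rewrite mulrA.
  under eq_bigr do rewrite inner.
  rewrite (bigD1 k) //= eqxx mul1r big1 => [|j]; last first.
    by rewrite eq_sym => /negbTE ->; rewrite mul0r.
  by rewrite addr0 /X => /eqP; rewrite addr_eq0 => /eqP E; rewrite mulNr E opprK.
have [c [_ Ew]] : exists c, (forall j, 0 <= c j) /\ toR w = lincomb c by case: Mw => _.
rewrite (Deval_lincomb _ _ Ew) big1 // => j _.
by rewrite (hS w c j Mw Ew) mulNr addrN mulr0.
Qed.

Lemma gcoef_kills_image b : kills_image (gcoef b).
Proof. exact/kills_image_shift_rel/gcoef_shift_rel. Qed.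

Lemma Mset_gdata u : Mset u -> exists b p, gdata b u p.
Proof.
move=> [_ [c [c_ge0 Eu]]].
pose t j := Num.floor (c j); pose v j := c j - (t j)%:~R.
exists (u - \sum_j t j *: a j), (v, fun j => - t j).
split=> [j /=|].
  have := floorD1_gt (c j); have := floor_le (c j); rewrite intrD /v /t => *.
  by apply/andP; split; lra.
split=> /=.
  rewrite toRB toR_sum Eu -sumrB; apply: eq_bigr => j _.
  by rewrite toRZ scalerBl.
split=> [j|]; first by rewrite oppr_le0 floor_ge0.
by rewrite Eu; apply: eq_bigr => j _; rewrite /= intrN opprK subrK.
Qed.

Lemma kills_image_gcoef h b u p : kills_image h -> gdata b u p -> h u = h b * gcoef b u.
Proof.
move=> /kills_image_shift_rel hS; case: p => v s.
suff IH : forall N w s, (\sum_j `|s j|)%N = N -> gdata b w (v, s) ->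
    h w = h b * gcoef b w.
  by move=> g; apply: IH erefl g.
elim/ltn_ind=> N IH w {}s HN g.
have [k sk | s_nneg] := pickP (fun k => s k < 0); last first.
  have s0 j : s j = 0.
    by have [_ [_ [/(_ j) /= s_le0 _]]] := g; move: (s_nneg j) s_le0; lia.
  have Bb := gdata_Bset g.
  have -> : w = b.
    apply: toR_inj; have [_ [-> [_ ->]]] := g.
    by apply: eq_bigr => j _; rewrite /= s0 subr0.
  by rewrite gcoef_dual // eqxx mulr1.
pose s' j := s j + (j == k)%:Z.
have Ew : w = (w - a k) + a k by rewrite subrK.
have g' : gdata b (w - a k) (v, s') by apply: gdata_subr sk; rewrite -Ew.
have lt_s' : (\sum_j `|s' j| < N)%N.
  rewrite -HN (bigD1 k) //= [X in (_ < X)%N](bigD1 k) //= /s' eqxx.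
  rewrite (eq_bigr (fun j => `|s j|%N)) => [|j /negbTE ->]; last by rewrite addr0.
  by rewrite ltn_add2r /=; move: sk; lia.
have [_ [_ [_ Ew']]] := g'.
have Mw' := gdata_Mset g'.
apply: (mulfI (l_neq0 k)); rewrite Ew mulrCA (@gcoef_shift_rel b _ _ k Mw' Ew').
by rewrite (hS _ _ k Mw' Ew') (IH _ lt_s' _ _ erefl g') mulrCA.
Qed.

Lemma Bset_entry_bound b i : Bset b -> (`|b ord0 i| <= \sum_j `|a j ord0 i|)%N.
Proof.
move=> [_ [c [c01 Eb]]].
rewrite -(ler_nat R) natr_sum natr_absz intr_norm -toRE Eb lincomb_entry.
apply: le_trans (ler_norm_sum _ _ _) _; apply: ler_sum => j _.
rewrite natr_absz intr_norm normrM ler_piMl //.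
by have /andP[c0 c1] := c01 j; rewrite ger0_norm // ltW.
Qed.

Lemma finite_Bset : finite_set Bset.
Proof.
pose N := (\sum_i \sum_j `|a j ord0 i|)%N.
have bound b i : Bset b -> (`|b ord0 i| <= N)%N.
  move=> Bb; apply: leq_trans (Bset_entry_bound i Bb) _.
  by rewrite /N (bigD1 i) //= leq_addr.
pose f (g : {ffun 'I_n -> 'I_(N.*2.+1)}) : 'rV[int]_n := \row_i ((g i : nat)%:Z - N%:Z).
apply: (@sub_finite_set _ _ (f @` setT)); last exact/finite_image/finite_finset.
move=> b Bb; exists [ffun i => inord `|b ord0 i + N%:Z|] => //.
apply/rowP => i; rewrite !mxE ffunE -[b 0 i]/(b ord0 i) inordK;
  by have := bound b i Bb; lia.
Qed.

Lemma kills_image_span h u : kills_image h -> Mset u ->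
  h u = \sum_(b \in Bset) h b * gcoef b u.
Proof.
move=> hK Mu; have [b [p g]] := Mset_gdata Mu.
rewrite (fsbigD1 b) //=; [|exact: finite_Bset | exact: gdata_Bset g].
rewrite fsbig1 ?addr0; first exact: kills_image_gcoef hK g.
move=> b' [Bb' nb']; rewrite gcoef_eq0 ?mulr0 // => -[q g'].
exact/nb'/(gdata_base_uniq g' g).
Qed.

End Proposition.

Theorem proposition3p15 (R : realType) (n m : nat)
  (a : 'I_m -> 'rV[int]_n) (l : 'I_m -> nat)
  (a0 : 'rV[int]_n) (l0 : nat)
  (Hind : @lin_indep R n m a)
  (Hlpos : forall j, (0 < l j)%N)
  (Hl0 : l0 = (\sum_j l j)%N)
  (Hrel : a0 *+ l0 = \sum_j a j *+ l j)
  (Hgcd : gcdn l0 (\big[gcdn/0%N]_j l j) = 1%N) :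
  (* each g_b vanishes on sum_i D_{i,0} S_0 *)
  (forall b, @Bset R n m a b -> @kills_image R n m a l (@gcoef R n m a l b)) /\
  (* duality: g_b(x^b') = delta_{b,b'} *)
  (forall b b', @Bset R n m a b -> @Bset R n m a b' ->
     @gcoef R n m a l b b' = (if b == b' then 1 else 0)) /\
  (* B is finite and the g_b span Hom_C(W_0, C) *)
  finite_set (@Bset R n m a) /\
  (forall h : 'rV[int]_n -> R[i], @kills_image R n m a l h ->
     forall u, @Mset R n m a u -> h u = \sum_(b \in @Bset R n m a) h b * @gcoef R n m a l b u).
Proof.
split; first by move=> b _; exact: gcoef_kills_image Hind Hlpos b.
split; first exact: gcoef_dual.
split; first exact: finite_Bset.
move=> h hK u Mu; exact: (kills_image_span Hind Hlpos hK Mu).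
Qed.
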